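(* Let $G$ be an $n$-vertex graph, $k$ an integer, and $H\subseteq G$ a $k$-spanner of $G$ that contains a cycle. Let $C$ be any shortest cycle of $H$ and let $L_H$ be its length. If $2(n-k)\le L_H\le k+1$, then there exists an edge $e$ of $C$ such that $H\setminus\{e\}$ (the graph $H$ with edge $e$ removed) is still a $k$-spanner of $G$.
   Context: All graphs are undirected and unweighted. For a graph $G=(V,E)$ and integer $k$, a $k$-spanner of $G$ is a subgraph $H=(V,E')$, $E'\subseteq E$, with $\mathrm{dist}_H(u,v)\le k\cdot\mathrm{dist}_G(u,v)$ for all $u,v\in V$. *)

From mathcomp Require Import all_boot.
Set Implicit Arguments. Unset Strict Implicit. Unset Printing Implicit Defensive.

Definition simple_graph (T : finType) (g : rel T) : Prop :=
  symmetric g /\ irreflexive g.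

Definition walk (T : finType) (g : rel T) (u v : T) (m : nat) : Prop :=
  exists p : seq T, [/\ path g u p, last u p = v & size p = m].

(* d is the (finite) graph distance between u and v. If u,v are disconnected
   no d satisfies this (distance = infinity). *)
Definition is_dist (T : finType) (g : rel T) (u v : T) (d : nat) : Prop :=
  walk g u v d /\ forall m, walk g u v m -> d <= m.

Definition subgraph (T : finType) (h g : rel T) : Prop :=
  forall x y, h x y -> g x y.

(* H is a k-spanner of G: dist_H(u,v) <= k * dist_G(u,v) for all u, v
   (with the convention that the inequality is vacuous when dist_G(u,v) = oo,
   and that dist_H(u,v) must be finite when dist_G(u,v) is). *)
Definition spanner (T : finType) (g h : rel T) (k : nat) : Prop :=
  subgraph h g /\
  forall u v dG, is_dist g u v dG -> exists dH, is_dist h u v dH /\ dH <= k * dG.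

Definition is_cycle (T : finType) (g : rel T) (c : seq T) : Prop :=
  3 <= size c /\ ucycle g c.

Definition shortest_cycle (T : finType) (g : rel T) (c : seq T) : Prop :=
  is_cycle g c /\ forall c', is_cycle g c' -> size c <= size c'.

Definition cycle_edge (T : finType) (c : seq T) (a b : T) : Prop :=
  a \in c /\ b = next c a.

Definition remove_edge (T : finType) (h : rel T) (a b : T) : rel T :=
  fun x y => h x y && ~~ (((x == a) && (y == b)) || ((x == b) && (y == a))).

From mathcomp Require Import all_boot zify.
From Stdlib Require Import Classical.

(* Let L be the length of C and m = n - L the number of vertices off C.  Attach
   every component of H - C that touches C to one of its neighbours on C, and let
   the load of a vertex c of C count the off-cycle vertices attached to c; loads
   sum to at most m.  Removing an edge e of C turns C into a path, and two
   H-connected vertices are then joined in H - e either inside one component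
   (within m <= k steps) or through their attachment points u, v, within
   load u + load v + dist_e(u, v) steps, dist_e being the distance along the path.
   If no edge of C could be removed, every e would be blocked by a pair u, v with
   k < load u + load v + dist_e(u, v).  As dist_e(u, v) < L, such an e lies within
   some radius r u of u or r v of v, for radii with sum r <= sum load - (k + 1 - L);
   hence L <= 2 sum r, i.e. 2 (k + 1) <= L + 2 m, contradicting 2 (n - k) <= L <= k + 1. *)

Set Implicit Arguments.
Unset Strict Implicit.
Unset Printing Implicit Defensive.

Section Walks.

Variables (T : finType) (g : rel T).

Lemma walk0 u : walk g u u 0.
Proof. by exists [::]. Qed.

Lemma walk1 u v : g u v -> walk g u v 1.
Proof. by exists [:: v]; rewrite /= andbT. Qed.

Lemma walk_cat u v w m n : walk g u v m -> walk g v w n -> walk g u w (m + n).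
Proof.
move=> [p [gp <- <-]] [q [gq <- <-]]; exists (p ++ q).
by rewrite cat_path gp gq last_cat size_cat.
Qed.

Lemma walk_rev u v m : symmetric g -> walk g u v m -> walk g v u m.
Proof.
move=> sym_g [p [gp <- <-]]; exists (rev (belast u p)); split.
- by rewrite rev_path (eq_path (fun x y => sym_g y x)).
- by case: p {gp} => //= x p; rewrite rev_cons last_rcons.
- by rewrite size_rev size_belast.
Qed.

Lemma sub_walk (g' : rel T) u v m : subrel g g' -> walk g u v m -> walk g' u v m.
Proof. by move=> gg' [p [gp lp sp]]; exists p; split=> //; apply: sub_path gp. Qed.

Lemma walk_iter (f : T -> T) x n :
  (forall t, t < n -> g (iter t f x) (iter t.+1 f x)) -> walk g x (iter n f x) n.
Proof.
move=> steps; exists (traject f (f x) n); rewrite last_traject size_traject.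
split=> //; elim: n x steps => //= n IHn x steps.
rewrite (steps 0 isT) /=; apply: IHn => t lt_tn.
by rewrite -!iterSr; apply: steps.
Qed.

Lemma connect_walk x y :
  connect g x y -> exists2 l, l < #|[set z | connect g x z]| & walk g x y l.
Proof.
move=> /connectP[p gp ->]; have [q gq uq _] := shortenP gp.
exists (size q); last by exists q.
rewrite cardE -[(size q).+1]/(size (x :: q)); apply: uniq_leq_size => // z zq.
by rewrite mem_enum inE; apply: (path_connect gq).
Qed.

Lemma walk_dist u v m : walk g u v m -> exists d, is_dist g u v d /\ d <= m.
Proof.
elim: m {-2}m (leqnn m) => [|n IHn] m le_mn uvm.
  by exists m; split=> //; split=> // m' _; lia.
have [[m' [lt_m'm uvm']]|minimal] := classic (exists m', m' < m /\ walk g u v m').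
  by have [d [dd le_dm']] := IHn m' ltac:(lia) uvm'; exists d; split=> //; lia.
exists m; split=> //; split=> // m' uvm'; rewrite leqNgt; apply/negP => lt_m'm.
by apply: minimal; exists m'.
Qed.

End Walks.

Lemma spanner_subgraph (T : finType) (G H R : rel T) k :
  spanner G H k -> subgraph R H ->
  (forall x y d, walk H x y d -> d <= k -> exists2 l, l <= k & walk R x y l) ->
  spanner G R k.
Proof.
move=> [HG spanH] RH short; split=> [x y /RH/HG //|u v dG [[p [Gp <- <-]] _]].
suff [D le_D uvD] : exists2 D, D <= k * size p & walk R u (last u p) D.
  by have [d [dd le_dD]] := walk_dist uvD; exists d; split=> //; lia.
elim: p u Gp => [|z p IHp] u /=; first by exists 0; last exact: walk0.
move=> /andP[Guz /IHp[D le_D zD]].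
have [d [dd le_d1]] := walk_dist (walk1 Guz).
have [dH [[uzH _] le_dH]] := spanH u z d dd.
have [l le_lk uzR] : exists2 l, l <= k & walk R u z l.
  apply: short uzH _; apply: leq_trans le_dH _.
  by rewrite -{2}[k]muln1 leq_mul2l le_d1 orbT.
by exists (l + D); [rewrite mulnS; lia | apply: walk_cat uzR zD].
Qed.

Lemma iter_inj (T : Type) (f : T -> T) n : injective f -> injective (iter n f).
Proof. by move=> inj_f; elim: n => //= n IHn x y /inj_f/IHn. Qed.

Section CutCycle.

Variables (T : finType) (H : rel T) (C : seq T).
Hypotheses (uniqC : uniq C) (cycleC : cycle H C).

(* Position of u on the path obtained by cutting C at the edge {a, next C a}:
   next C a is at position 0 and a at position size C - 1. *)
Definition cut_pos a u := findex (next C) (next C a) u.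

Let fcycleC := cycle_next uniqC.

Let connect_next a u : a \in C -> u \in C -> fconnect (next C) (next C a) u.
Proof. by move=> aC uC; rewrite (fconnect_cycle fcycleC) ?mem_next. Qed.

Let order_next a : a \in C -> order (next C) (next C a) = size C.
Proof. by move=> aC; rewrite (order_cycle fcycleC) ?mem_next. Qed.

Lemma cut_pos_lt a u : a \in C -> u \in C -> cut_pos a u < size C.
Proof. by move=> aC uC; rewrite -(order_next aC) findex_max ?connect_next. Qed.

Lemma iter_cut_pos a u : a \in C -> u \in C -> iter (cut_pos a u).+1 (next C) a = u.
Proof. by move=> aC uC; rewrite iterSr iter_findex ?connect_next. Qed.

Lemma cut_pos_iter a t : a \in C -> t < size C -> cut_pos a (iter t (next C) (next C a)) = t.
Proof. by move=> aC lt_tC; rewrite /cut_pos findex_iter ?order_next. Qed.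

Lemma cut_pos_inj u : u \in C -> {in C &, injective (cut_pos^~ u)}.
Proof.
move=> uC a a' aC a'C /= eq_pos.
apply: (iter_inj (n := (cut_pos a u).+1) (can_inj (prev_next uniqC))).
by rewrite iter_cut_pos // eq_pos iter_cut_pos.
Qed.

Lemma cut_pos_self a : a \in C -> cut_pos a a = (size C).-1.
Proof.
move=> aC; rewrite -{2}(finv_f_cycle fcycleC aC) /finv order_next //.
by rewrite cut_pos_iter // ltn_predL (leq_ltn_trans _ (cut_pos_lt aC aC)).
Qed.

Lemma cut_step a x :
  2 < size C -> a \in C -> x \in C -> x != a -> remove_edge H a (next C a) x (next C x).
Proof.
move=> C3 aC xC xa; rewrite /remove_edge /= (next_cycle cycleC xC) (negbTE xa) /=.
apply/negP => /andP[/eqP xb /eqP nxa].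
have : cut_pos a (iter 1 (next C) (next C a)) = 1 by rewrite cut_pos_iter // ltnW.
by rewrite /= -xb nxa cut_pos_self //; lia.
Qed.

Lemma cut_walk a u v :
  2 < size C -> a \in C -> u \in C -> v \in C -> cut_pos a u <= cut_pos a v ->
  walk (remove_edge H a (next C a)) u v (cut_pos a v - cut_pos a u).
Proof.
move=> C3 aC uC vC le_uv; have lt_vC := cut_pos_lt aC vC.
have reach_v : iter (cut_pos a v - cut_pos a u) (next C) u = v.
  by rewrite -{2}(iter_cut_pos aC uC) -iterD addnS subnK // iter_cut_pos.
rewrite -[X in walk _ _ X _]reach_v.
apply: walk_iter => t lt_t; rewrite iterS; apply: cut_step => //.
  by apply: iter_in uC => x; rewrite mem_next.
have : cut_pos a (iter t (next C) u) = t + cut_pos a u.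
  by rewrite -{1}(iter_cut_pos aC uC) iterSr -iterD cut_pos_iter //; lia.
by move=> pos_x; apply/eqP => xa; move: pos_x; rewrite xa cut_pos_self //; lia.
Qed.

End CutCycle.

Lemma remove_edge_sym (T : finType) (h : rel T) a b :
  symmetric h -> symmetric (remove_edge h a b).
Proof.
by move=> sym_h x y; rewrite /remove_edge /= sym_h orbC (andbC (y == a)) (andbC (y == b)).
Qed.

Lemma remove_edge_neq (T : finType) (h : rel T) a b x y :
  x != a -> x != b -> h x y -> remove_edge h a b x y.
Proof. by move=> /negbTE xa /negbTE xb hxy; rewrite /remove_edge hxy xa xb. Qed.

Section OffCycle.

Variables (T : finType) (H : rel T) (C : seq T).
Hypothesis symH : symmetric H.

Definition off_cycle : {set T} := [set x | x \notin C].

Definition off_rel : rel T := [rel x y | [&& H x y, x \notin C & y \notin C]].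

Definition off_comp x : {set T} := [set y | connect off_rel x y].

(* The junk value x (not on C) signals a component of H - C with no edge to C. *)
Definition anchor x : T :=
  if x \in C then x else odflt x [pick c in C | [exists y in off_comp x, H y c]].

Definition depth x := #|off_comp x :&: off_cycle|.

Definition load c := #|[set x in off_cycle | anchor x == c]|.

Let connect_off_sym : connect_sym off_rel.
Proof. by apply: sym_connect_sym => x y; rewrite /off_rel /= symH (andbC (x \notin C)). Qed.

Lemma off_comp_refl x : x \in off_comp x.
Proof. by rewrite inE connect0. Qed.

Lemma off_comp_sym x y : (y \in off_comp x) = (x \in off_comp y).
Proof. by rewrite !inE connect_off_sym. Qed.

Lemma off_comp_eq x y : y \in off_comp x -> off_comp y = off_comp x.
Proof.
by rewrite inE => xy; apply/setP => z; rewrite !inE (same_connect connect_off_sym xy).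
Qed.

Lemma off_comp_sub x : off_comp x \subset x |: off_cycle.
Proof.
apply/subsetP => y; rewrite !inE => /connectP[p].
case/lastP: p => [_ ->|p z]; rewrite ?eqxx //.
by rewrite rcons_path last_rcons => /andP[_ /and3P[_ _ zC]] ->; rewrite zC orbT.
Qed.

Lemma off_comp_in x y : y \in off_comp x -> y = x \/ x \notin C /\ y \notin C.
Proof.
move=> xy; have := subsetP (off_comp_sub x) y xy; rewrite off_comp_sym in xy.
have := subsetP (off_comp_sub y) x xy; rewrite !inE.
by case: eqP => [->|_] /=; [left | case: eqP => [->|_] /= xC yC; [left | right]].
Qed.

Lemma card_off_comp x : #|off_comp x| <= #|off_cycle|.+1.
Proof.
apply: leq_trans (subset_leq_card (off_comp_sub x)) _.
by rewrite cardsU1 addnC -addn1 leq_add2l leq_b1.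
Qed.

Lemma off_rel_remove_edge a b : a \in C -> b \in C -> subrel off_rel (remove_edge H a b).
Proof.
move=> aC bC x y /and3P[xy xC _].
by apply: remove_edge_neq xy; apply: contraNneq xC => ->.
Qed.

Lemma anchor_comp x y : anchor x \in C -> y \in off_comp x -> anchor y = anchor x.
Proof.
move=> ax xy; have [-> //|[xC yC]] := off_comp_in xy; move: ax.
rewrite /anchor (negbTE xC) (negbTE yC) (off_comp_eq xy).
by case: pickP => //= _; rewrite (negbTE xC).
Qed.

Lemma depth_le_load x : anchor x \in C -> depth x <= load (anchor x).
Proof.
move=> ax; apply/subset_leq_card/subsetP => y; rewrite !inE => /andP[xy ->] /=.
by rewrite (anchor_comp ax) // inE.
Qed.

Lemma depth_add x y : y \notin off_comp x -> depth x + depth y <= #|off_cycle|.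
Proof.
move=> yx; rewrite -cardsUI.
have -> : (off_comp x :&: off_cycle) :&: (off_comp y :&: off_cycle) = set0.
  apply/setP => z; rewrite !inE; apply/negP => /andP[/andP[xz _] /andP[yz _]].
  have xz' : z \in off_comp x by rewrite inE.
  have yz' : z \in off_comp y by rewrite inE.
  by move: yx; rewrite -(off_comp_eq xz') (off_comp_eq yz') off_comp_refl.
by rewrite cards0 addn0 subset_leq_card // subUset !subsetIr.
Qed.

Lemma sum_load : \sum_(c in C) load c <= #|off_cycle|.
Proof.
rewrite -sum1_card [X in _ <= X](partition_big anchor xpredT) //=.
rewrite [X in _ <= X](bigID (mem C)) /= -[X in X <= _]addn0 leq_add //.
by apply/eq_leq/eq_bigr => c _; rewrite sum1dep_card.
Qed.

Lemma anchor_walk a b x : a \in C -> b \in C -> anchor x \in C ->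
  exists2 l, l <= depth x & walk (remove_edge H a b) x (anchor x) l.
Proof.
move=> aC bC; rewrite /anchor; case: ifP => [_ _|/negbT xC].
  by exists 0; last exact: walk0.
case: pickP => [c /andP[_ /existsP[y /andP[xy yc]]] _ /=|_]; last by rewrite /= (negbTE xC).
have [l lt_l xyl] : exists2 l, l < #|off_comp x| & walk off_rel x y l.
  by apply: connect_walk; rewrite inE in xy.
have yC : y \notin C by have [->|[]] := off_comp_in xy.
have comp_off : off_comp x :&: off_cycle = off_comp x.
  by apply/setIidPl/subsetP => z /off_comp_in[->|[]]; rewrite inE.
exists l.+1; first by rewrite /depth comp_off.
rewrite -addn1; apply: walk_cat (sub_walk (off_rel_remove_edge aC bC) xyl) (walk1 _).
by apply: remove_edge_neq yc; apply: contraNneq yC => ->.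
Qed.

Lemma anchor_notin x y d : anchor x \notin C -> walk H x y d -> y \in off_comp x.
Proof.
rewrite /anchor; case: ifP => [->|/negbT xC] //.
case: pickP => [c /andP[-> _] //|none _ [p [xp <- _]]].
elim/last_ind: p xp => [|p z IHp]; first by rewrite off_comp_refl.
rewrite rcons_path last_rcons => /andP[/IHp xw wz]; set w := last x p in xw wz.
have wC : w \notin C by have [->|[]] := off_comp_in xw.
have zC : z \notin C.
  apply/negP => zC; have := none z; rewrite zC /= => /negbT/existsPn/(_ w).
  by rewrite xw wz.
have xw' : connect off_rel x w by rewrite inE in xw.
by rewrite inE (connect_trans xw' (connect1 _)) // /off_rel /= wz wC.
Qed.

End OffCycle.

Section Blocking.

Variables (T : finType) (H : rel T) (C : seq T) (k : nat) (a : T).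
Hypotheses (symH : symmetric H) (uniqC : uniq C) (cycleC : cycle H C).
Hypotheses (C3 : 2 < size C) (aC : a \in C).

Let R := remove_edge H a (next C a).

Let symR : symmetric R.
Proof. exact: remove_edge_sym. Qed.

Let next_aC : next C a \in C.
Proof. by rewrite mem_next. Qed.

Lemma anchored_pair x y u v :
  anchor H C x = u -> anchor H C y = v -> u \in C -> v \in C ->
  cut_pos C a u <= cut_pos C a v -> depth H C x + depth H C y <= k ->
  (forall l, l <= k -> ~ walk R x y l) ->
  cut_pos C a u < cut_pos C a v /\
  k < load H C u + load H C v + (cut_pos C a v - cut_pos C a u).
Proof.
move=> <- <- ax ay le_xy small_depth no_walk.
have [lx le_lx xu] := anchor_walk symH aC next_aC ax.
have [ly le_ly yv] := anchor_walk symH aC next_aC ay.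
have uv := cut_walk uniqC cycleC C3 aC ax ay le_xy.
have xy := walk_cat (walk_cat xu uv) (walk_rev symR yv).
have long : k < lx + (cut_pos C a (anchor H C y) - cut_pos C a (anchor H C x)) + ly.
  by rewrite ltnNge; apply/negP => short; apply: no_walk xy.
by have := depth_le_load symH ax; have := depth_le_load symH ay; lia.
Qed.

Lemma blocked_cut x y d :
  #|off_cycle C| <= k -> walk H x y d -> (forall l, l <= k -> ~ walk R x y l) ->
  exists u v, [/\ u \in C, v \in C, cut_pos C a u < cut_pos C a v &
                  k < load H C u + load H C v + (cut_pos C a v - cut_pos C a u)].
Proof.
move=> small xy no_walk.
have yx : y \notin off_comp H C x.
  rewrite inE; apply/negP => /connect_walk[l lt_l xyl].
  apply: (no_walk l); last exact: sub_walk (off_rel_remove_edge aC next_aC) xyl.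
  have : l < #|off_comp H C x| := lt_l.
  by have := card_off_comp H C x; lia.
have ax : anchor H C x \in C by apply: contraNT yx => /(anchor_notin symH)/(_ xy).
have ay : anchor H C y \in C.
  apply: contraNT yx => /(anchor_notin symH)/(_ (walk_rev symH xy)).
  by rewrite off_comp_sym.
have small_depth : depth H C x + depth H C y <= k.
  by apply: leq_trans small; apply: depth_add.
case: (leqP (cut_pos C a (anchor H C x)) (cut_pos C a (anchor H C y))).
  move=> le_xy.
  have [lt k_lt] := anchored_pair erefl erefl ax ay le_xy small_depth no_walk.
  by exists (anchor H C x), (anchor H C y).
move=> /ltnW le_yx; rewrite addnC in small_depth.
have no_walk' l : l <= k -> ~ walk R y x l by move=> le_lk /(walk_rev symR); apply: no_walk.
have [lt k_lt] := anchored_pair erefl erefl ay ax le_yx small_depth no_walk'.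
by exists (anchor H C y), (anchor H C x).
Qed.

End Blocking.

Section Counting.

Variable I : finType.

Lemma leq_card_window (A : {pred I}) (f : I -> nat) lo n :
  {in A &, injective f} -> (forall a, a \in A -> lo <= f a < lo + n) -> #|A| <= n.
Proof.
move=> inj_f bound; rewrite cardE -(size_map f) -(size_iota lo n).
apply: uniq_leq_size => [|_ /mapP[a aA ->]].
  by rewrite map_inj_in_uniq ?enum_uniq // => a b; rewrite !mem_enum; apply: inj_f.
by rewrite mem_iota bound // -mem_enum.
Qed.

Lemma leq_card_bigcup (J : finType) (U : {pred J}) (B : J -> {set I}) :
  #|\bigcup_(w in U) B w| <= \sum_(w in U) #|B w|.
Proof.
apply: (big_ind2 (fun (S : {set I}) n => #|S| <= n)) => [|S m S' n le_S le_S'|//].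
  by rewrite cards0.
by apply: leq_trans (leq_card_setU S S').1 (leq_add le_S le_S').
Qed.

Lemma leq_card_radius_cover (J : finType) (E : {pred I}) (U : {pred J}) (p : I -> J -> nat)
    (r : J -> nat) L :
  (forall w, w \in U -> {in E &, injective (p^~ w)}) ->
  (forall a w, a \in E -> w \in U -> p a w < L) ->
  (forall a, a \in E -> exists2 w, w \in U & (p a w < r w) || (L - r w <= p a w)) ->
  #|E| <= 2 * \sum_(w in U) r w.
Proof.
move=> inj_p lt_pL cover.
pose near w := [set a in E | p a w < r w] :|: [set a in E | L - r w <= p a w].
have sub_near : E \subset \bigcup_(w in U) near w.
  apply/subsetP => a aE; have [w wU close] := cover a aE.
  by apply/bigcupP; exists w; rewrite // !inE aE.
apply: leq_trans (subset_leq_card sub_near) _; apply: leq_trans (leq_card_bigcup _ _) _.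
rewrite big_distrr; apply: leq_sum => w wU /=; apply: leq_trans (leq_card_setU _ _).1 _.
have inj_w (P : pred I) : {in [set a in E | P a] &, injective (p^~ w)}.
  by move=> a b; rewrite !inE => /andP[aE _] /andP[bE _]; apply: inj_p.
rewrite mul2n -addnn; apply: leq_add.
  by apply: (leq_card_window (lo := 0) (inj_w _)) => a; rewrite inE => /andP[_ ->].
apply: (leq_card_window (lo := L - r w) (inj_w _)) => a; rewrite inE => /andP[aE ->].
by have := lt_pL a w aE wU; lia.
Qed.

Lemma weight_split (U : {pred I}) (W : I -> nat) s u0 v0 :
  u0 \in U -> v0 \in U -> u0 != v0 -> s < W u0 + W v0 ->
  exists r : I -> nat, \sum_(w in U) r w + s <= \sum_(w in U) W w /\
    forall u v, u \in U -> v \in U -> u != v -> s < W u + W v ->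
      W u + W v <= r u + r v + s.
Proof.
move=> u0U v0U u0v0 big0; have [c cU maxc] := @arg_maxnP _ u0 (mem U) W u0U.
have {}maxc w : w \in U -> W w <= W c := maxc w.
have [w1 [w1U w1c big1]] : exists w1, [/\ w1 \in U, w1 != c & s < W c + W w1].
  case: (eqVneq u0 c) => [u0c|u0c]; [exists v0 | exists u0]; split=> //.
  - by rewrite -u0c eq_sym.
  - by rewrite -u0c.
  - by have := maxc v0 v0U; lia.
(* The heaviest vertex c absorbs the slack s, and w1 the part of it exceeding W c. *)
exists (fun w => if w == c then W c - s else if w == w1 then W w - (s - W c) else W w).
split.
  rewrite (bigD1 c) // [X in _ <= X](bigD1 c) //= (bigD1 w1) ?w1U ?w1c //=.
  rewrite [\sum_(i in U | i != c) W i](bigD1 w1) ?w1U ?w1c //= eqxx (negbTE w1c) eqxx.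
  rewrite (eq_bigr W) => [|w /andP[/andP[_ /negbTE -> ] /negbTE ->]] //; lia.
move=> u v uU vU uv big_uv; have := maxc u uU; have := maxc v vU; move: big_uv.
case: (eqVneq u c) => [eu|nu]; case: (eqVneq v c) => [ev|nv].
- by move: uv; rewrite eu ev eqxx.
- by case: eqP => _ /=; clear; lia.
- by case: eqP => _ /=; clear; lia.
- by do 2 case: eqP => _ /=; clear; lia.
Qed.

Lemma blocked_cuts_load (E : {pred I}) (p : I -> I -> nat) (W : I -> nat) k :
  0 < #|E| <= k.+1 ->
  (forall a w, a \in E -> w \in E -> p a w < #|E|) ->
  (forall w, w \in E -> {in E &, injective (p^~ w)}) ->
  (forall a, a \in E -> exists u v,
     [/\ u \in E, v \in E, p a u < p a v & k < W u + W v + (p a v - p a u)]) ->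
  2 * k.+1 <= #|E| + 2 * \sum_(w in E) W w.
Proof.
move=> /andP[E0 Ek] lt_pE inj_p blocked; have [a0 a0E] := card_gt0P E0.
have [u0 [v0 [u0E v0E lt0 big0]]] := blocked a0 a0E.
have neq0 : u0 != v0 by apply: contraTneq lt0 => ->; rewrite ltnn.
have [r [sum_r pair_r]] := @weight_split E W (k.+1 - #|E|) u0 v0 u0E v0E neq0
  ltac:(have := lt_pE a0 v0 a0E v0E; lia).
suff : #|E| <= 2 * \sum_(w in E) r w by lia.
apply: (leq_card_radius_cover inj_p lt_pE) => a aE.
have [u [v [uE vE lt_uv big_uv]]] := blocked a aE.
have neq : u != v by apply: contraTneq lt_uv => ->; rewrite ltnn.
have := pair_r u v uE vE neq ltac:(have := lt_pE a v aE vE; lia).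
have := lt_pE a u aE uE; have := lt_pE a v aE vE.
case: (ltnP (p a u) (r u)) => [close_u|far_u] *; first by exists u; rewrite ?close_u.
by exists v; rewrite // orbC; apply/orP; left; lia.
Qed.

End Counting.

Lemma exists_robust_edge (T : finType) (H : rel T) (C : seq T) k :
  symmetric H -> uniq C -> cycle H C -> 2 < size C <= k.+1 ->
  size C + 2 * #|off_cycle C| <= 2 * k ->
  exists2 a, a \in C & forall x y d, walk H x y d ->
    exists2 l, l <= k & walk (remove_edge H a (next C a)) x y l.
Proof.
move=> symH uniqC cycleC /andP[C3 Ck] small; apply: NNPP => none.
have blocked a : a \in C -> exists u v,
    [/\ u \in C, v \in C, cut_pos C a u < cut_pos C a v &
         k < load H C u + load H C v + (cut_pos C a v - cut_pos C a u)].
  move=> aC; apply: NNPP => no_pair; apply: none; exists a => // x y d xy.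
  apply: NNPP => no_short; apply: no_pair; apply: (blocked_cut symH uniqC cycleC C3 aC _ xy).
    by lia.
  by move=> l le_lk w; apply: no_short; exists l.
have cardC : #|C| = size C by apply/card_uniqP.
have size_ok : 0 < #|[in C]| <= k.+1 by rewrite cardC; lia.
have := blocked_cuts_load size_ok _ (cut_pos_inj uniqC) blocked.
rewrite cardC => /(_ (cut_pos_lt uniqC)).
have : \sum_(w in [in C]) load H C w <= #|off_cycle C| := sum_load H C.
move: (\sum_(w in [in C]) load H C w) => S; lia.
Qed.

Theorem lemma3p1 (T : finType) (G H : rel T) (k : nat) (C : seq T) :
  simple_graph G -> simple_graph H ->
  spanner G H k ->
  shortest_cycle H C ->
  2 * (#|T| - k) <= size C <= k + 1 ->
  exists a b, cycle_edge C a b /\ spanner G (remove_edge H a b) k.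
Proof.
move=> _ [symH _] spanH [[C3 /andP[cycleC uniqC]] _] /andP[lowL highL].
have cardT : #|T| = size C + #|off_cycle C|.
  rewrite -(card_uniqP uniqC) -(cardC [in C]); congr (_ + _).
  by apply: eq_card => x; rewrite !inE.
have C_k : 2 < size C <= k.+1 by lia.
have few_off : size C + 2 * #|off_cycle C| <= 2 * k by lia.
have [a aC robust] := exists_robust_edge symH uniqC cycleC C_k few_off.
exists a, (next C a); split=> //.
by apply: spanner_subgraph spanH _ _ => [x y /andP[] | x y d /robust].
Qed.
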